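(* A commutative ring $R$ is a multiplication ring with finitely many minimal prime ideals if and only if there exists a faithful, Noetherian, distributive $R$-module.
   Context: All rings are commutative with $1$ and all modules are unital. A ring $R$ is a multiplication ring if whenever $I,J$ are ideals of $R$ with $J\subseteq I$, there is an ideal $I'$ of $R$ with $J=I'I$. A submodule $N$ of an $R$-module $M$ is distributive if $(M_1+M_2)\cap N=M_1\cap N+M_2\cap N$ for all submodules $M_1,M_2$ of $M$ (equivalently, $M_1\cap M_2+N=(M_1+N)\cap(M_2+N)$ for all submodules $M_1,M_2$); $M$ is a distributive module if all its submodules are distributive. $M$ is faithful if $\mathrm{ann}_R(M)=0$. *)

From mathcomp Require Import all_boot all_order all_algebra.
Set Implicit Arguments. Unset Strict Implicit. Unset Printing Implicit Defensive.
Import GRing.Theory.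
Local Open Scope ring_scope.

Section Ideals.
Variable R : comPzRingType.

Definition is_ideal (I : R -> Prop) : Prop :=
  [/\ I 0, (forall x y, I x -> I y -> I (x + y)) & (forall r x, I x -> I (r * x))].

Definition ideal_prod (I J : R -> Prop) : R -> Prop :=
  fun x => forall K, is_ideal K -> (forall a b, I a -> J b -> K (a * b)) -> K x.

Definition multiplication_ring : Prop :=
  forall I J : R -> Prop, is_ideal I -> is_ideal J -> (forall x, J x -> I x) ->
    exists I' : R -> Prop, is_ideal I' /\ (forall x, J x <-> ideal_prod I' I x).

Definition is_prime_ideal (P : R -> Prop) : Prop :=
  [/\ is_ideal P, ~ P 1 & (forall a b, P (a * b) -> P a \/ P b)].

Definition is_minimal_prime (P : R -> Prop) : Prop :=
  is_prime_ideal P /\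
  (forall Q, is_prime_ideal Q -> (forall x, Q x -> P x) -> forall x, P x -> Q x).

Definition finitely_many_minimal_primes : Prop :=
  exists (n : nat) (f : 'I_n -> R -> Prop),
    forall P, is_minimal_prime P -> exists i, forall x, P x <-> f i x.

End Ideals.

Section Modules.
Variables (R : comPzRingType) (M : lmodType R).

Definition is_submodule (N : M -> Prop) : Prop :=
  [/\ N 0, (forall x y, N x -> N y -> N (x + y)) & (forall (r : R) x, N x -> N (r *: x))].

Definition submod_sum (A B : M -> Prop) : M -> Prop :=
  fun x => exists a b, [/\ A a, B b & x = a + b].

Definition submod_cap (A B : M -> Prop) : M -> Prop := fun x => A x /\ B x.

Definition distributive_submodule (N : M -> Prop) : Prop :=
  forall M1 M2 : M -> Prop, is_submodule M1 -> is_submodule M2 ->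
    forall x, submod_cap (submod_sum M1 M2) N x <->
              submod_sum (submod_cap M1 N) (submod_cap M2 N) x.

Definition distributive_module : Prop :=
  forall N, is_submodule N -> distributive_submodule N.

Definition noetherian_module : Prop :=
  forall N : nat -> M -> Prop, (forall n, is_submodule (N n)) ->
    (forall n x, N n x -> N n.+1 x) ->
    exists m, forall n, (m <= n)%N -> forall x, N n x -> N m x.

Definition faithful_module : Prop :=
  forall r : R, (forall m : M, r *: m = 0) -> r = 0.

End Modules.

(* Both sides amount to: R is arithmetical (for all x, y some r has r y in Rx and
   (1 - r) x in Ry) and Noetherian.

   If R is a multiplication ring, incomparable primes are comaximal, hence so are the
   kernels of R -> R_P at distinct minimal primes P, and an element vanishing at every
   minimal prime is 0.  With finitely many minimal primes this yields, for each minimal P,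
   a c with 1 - c in ker(R -> R_P) and c ker(R -> R_P) = 0, from which every ideal is
   locally principal, hence finitely generated; R itself is then a faithful Noetherian
   distributive module.

   Conversely, a Noetherian distributive module M is finitely generated and locally
   cyclic: some t_i with sum 1 satisfy t_i M in R g_i.  If M is faithful, t_i z g_i = 0
   forces t_i z = 0, which carries the arithmetical and Noetherian properties of the
   cyclic pieces back to R.  A Noetherian arithmetical ring is a multiplication ring
   (J = (J : I) I can be checked on the local patches of I), and in a Noetherian ring a
   finite product of primes vanishes, so every minimal prime is one of its factors. *)

From mathcomp Require Import all_boot all_order all_algebra.
From mathcomp Require Import boolp classical_sets ring.
Set Implicit Arguments. Unset Strict Implicit. Unset Printing Implicit Defensive.
Import GRing.Theory.
Local Open Scope ring_scope.

Section FinitelyGenerated.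
Variables (R : comPzRingType) (M : lmodType R).
Implicit Types (N : M -> Prop) (s : seq M) (x y : M).

Fixpoint span s : M -> Prop :=
  match s with
  | [::] => fun x => x = 0
  | m :: s' => fun x => exists r y, span s' y /\ x = r *: m + y
  end.

Definition finitely_generated N :=
  exists s, (forall x, x \in s -> N x) /\ (forall x, N x -> span s x).

Lemma span_submodule s : is_submodule (span s).
Proof.
elim: s => [|m s [H0 HD HZ]] /=.
  by split=> [//|x y -> ->|r x ->]; rewrite ?addr0 ?scaler0.
split.
- by exists 0, 0; rewrite scale0r addr0.
- move=> x y [r [x' [Hx' ->]]] [r' [y' [Hy' ->]]].
  exists (r + r'), (x' + y'); split; first exact: HD.
  by rewrite scalerDl addrACA.
- move=> c x [r [x' [Hx' ->]]]; exists (c * r), (c *: x'); split; first exact: HZ.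
  by rewrite scalerDr scalerA.
Qed.

Lemma span_cons m s x : span s x -> span (m :: s) x.
Proof. by move=> H; exists 0, x; split=> //; rewrite scale0r add0r. Qed.

Lemma span_mem s x : x \in s -> span s x.
Proof.
elim: s => [//|m s IH] /=; rewrite inE => /orP[/eqP ->|xs]; last exact/span_cons/IH.
by exists 1, 0; split; [case: (span_submodule s)|rewrite scale1r addr0].
Qed.

Lemma span_min N s : is_submodule N -> (forall x, x \in s -> N x) ->
  forall x, span s x -> N x.
Proof.
move=> [N0 ND NZ]; elim: s => [|m s IH] Hs x /=; first by move=> ->.
move=> [r [y [Hy ->]]]; apply: ND; first by apply/NZ/Hs; rewrite inE eqxx.
by apply: IH => // z zs; apply: Hs; rewrite inE zs orbT.
Qed.

Lemma span_catl s1 s2 x : span s1 x -> span (s1 ++ s2) x.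
Proof.
apply: span_min; first exact: span_submodule.
by move=> y ys; apply: span_mem; rewrite mem_cat ys.
Qed.

Lemma span_catr s1 s2 x : span s2 x -> span (s1 ++ s2) x.
Proof.
apply: span_min; first exact: span_submodule.
by move=> y ys; apply: span_mem; rewrite mem_cat ys orbT.
Qed.

Lemma noetherian_finitely_generated N :
  noetherian_module M -> is_submodule N -> finitely_generated N.
Proof.
move=> noethM [N0 ND NZ].
(* Greedily adjoin an element of [N] outside the current span; ACC stops the process. *)
pose next s : M :=
  if pselect (exists x, N x /\ ~ span s x) is left ex then projT1 (cid ex) else 0.
have next_in s : N (next s).
  by rewrite /next; case: pselect => [ex|//]; case: (cid ex) => x [].
have next_new s : (exists x, N x /\ ~ span s x) -> ~ span s (next s).
  by rewrite /next; case: pselect => [ex _|//]; case: (cid ex) => x [].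
pose fix gens k := if k is k'.+1 then next (gens k') :: gens k' else [::].
have gens_in k x : x \in gens k -> N x.
  elim: k => [//|k IH] /=; rewrite inE => /orP[/eqP ->|]; [exact: next_in|exact: IH].
have [m Hm] := noethM (fun k => span (gens k)) (fun k => span_submodule (gens k))
  (fun k x => span_cons (next (gens k)) (s := gens k) (x := x)).
exists (gens m); split=> [|x Nx]; first exact: gens_in.
apply: contrapT => Hx.
have := Hm m.+1 (leqnSn m) (next (gens m)) (span_mem (mem_head _ _)).
by apply: next_new; exists x.
Qed.

Lemma finitely_generated_noetherian :
  (forall N, is_submodule N -> finitely_generated N) -> noetherian_module M.
Proof.
move=> fgM N HN Nincr.
have Nmono n m x : (n <= m)%N -> N n x -> N m x.
  by move=> /subnK <-; elim: (m - n)%N => [//|k IH] /IH; rewrite addSn; apply: Nincr.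
pose U x := exists n, N n x.
have HU : is_submodule U.
  split; first by exists 0%N; case: (HN 0%N).
  - move=> x y [n Hx] [m Hy]; exists (maxn n m).
    case: (HN (maxn n m)) => _ HD _; apply: HD.
      by apply: (Nmono n) => //; rewrite leq_maxl.
    by apply: (Nmono m) => //; rewrite leq_maxr.
  - by move=> r x [n Hx]; exists n; case: (HN n) => _ _ HZ; apply: HZ.
have [s [sU Us]] := fgM U HU.
have [m Hm] : exists m, forall x, x \in s -> N m x.
  elim: s sU {Us} => [|y s IH] sU; first by exists 0%N.
  have [m1 Hm1] := IH (fun x xs => sU x (@mem_behead _ (y :: s) _ xs)).
  have [m2 Hm2] := sU y (mem_head _ _).
  exists (maxn m1 m2) => x; rewrite inE => /orP[/eqP ->|xs].
    by apply: (Nmono m2) => //; rewrite leq_maxr.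
  by apply: (Nmono m1); [rewrite leq_maxl|apply: Hm1].
exists m => n _ x Hx.
by apply: (span_min (HN m) Hm); apply: Us; exists n.
Qed.

Lemma finitely_generated_glue N (L : seq R) : is_submodule N -> \sum_(t <- L) t = 1 ->
  (forall t, t \in L -> exists s, (forall x, x \in s -> N x) /\
                                  forall y, N y -> span s (t *: y)) ->
  finitely_generated N.
Proof.
move=> HN sumL local.
suff [s [sN Ns]] : exists s, (forall x, x \in s -> N x) /\
    forall y, N y -> span s ((\sum_(t <- L) t) *: y).
  by exists s; split=> // y /Ns; rewrite sumL scale1r.
elim: L local {sumL} => [|t L IH] local.
  by exists [::]; split=> // y _; rewrite big_nil scale0r.
have [s [sN Ns]] := IH (fun u uL => local u (@mem_behead _ (t :: L) _ uL)).
have [s' [s'N Ns']] := local t (mem_head _ _).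
exists (s' ++ s); split; first by move=> x; rewrite mem_cat => /orP[/s'N|/sN].
move=> y Ny; rewrite big_cons scalerDl.
have [_ spanD _] := span_submodule (s' ++ s).
by apply: spanD; [apply/span_catl/Ns'|apply/span_catr/Ns].
Qed.

End FinitelyGenerated.

Section CyclicPatches.
Variables (R : comPzRingType) (M : lmodType R).
Implicit Types (N : M -> Prop) (s : seq M) (x y : M).

Definition cyclic x : M -> Prop := fun m => exists a, m = a *: x.

Lemma cyclic_submodule x : is_submodule (cyclic x).
Proof.
split; first by exists 0; rewrite scale0r.
- by move=> _ _ [a ->] [b ->]; exists (a + b); rewrite scalerDl.
- by move=> r _ [a ->]; exists (r * a); rewrite scalerA.
Qed.

Lemma cyclic_self x : cyclic x x.
Proof. by exists 1; rewrite scale1r. Qed.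

(* Stephenson's criterion: the colon ideals (Rx : y) and (Ry : x) are comaximal. *)
Definition comaximal_colons :=
  forall x y, exists r : R, cyclic x (r *: y) /\ cyclic y ((1 - r) *: x).

Lemma distributive_comaximal_colons : distributive_module M -> comaximal_colons.
Proof.
move=> distrM x y.
have [x_dec _] := distrM (cyclic x) (cyclic_submodule x) (cyclic y) (cyclic (x - y))
  (cyclic_submodule y) (cyclic_submodule (x - y)) x.
have : submod_cap (submod_sum (cyclic y) (cyclic (x - y))) (cyclic x) x.
  split; last exact: cyclic_self.
  exists y, (x - y); split; [exact: cyclic_self|exact: cyclic_self|].
  by rewrite addrC subrK.
move=> /x_dec [a [b [[[d Ha] [e Ha']] [[r Hb] [c Hb']] Hx]]].
exists r; split.
  exists (r - c); rewrite scalerBl -Hb' Hb scalerBr.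
  by rewrite opprB addrC subrK.
exists (d - r); rewrite [RHS]scalerBl -Ha scalerBl scale1r.
have -> : a = x - b by rewrite Hx addrK.
by rewrite Hb scalerBr opprB addrA addrAC addrK.
Qed.

Lemma comaximal_colons_distributive : comaximal_colons -> distributive_module M.
Proof.
move=> colM N [N0 ND NZ] M1 M2 [A0 AD AZ] [B0 BD BZ] z; split.
- move=> [[m1 [m2 [H1 H2 ->]]] Hz].
  have [r [[a Ha] [b Hb]]] := colM m1 m2.
  exists (r *: (m1 + m2)), ((1 - r) *: (m1 + m2)); split.
  + split; last exact: NZ.
    by rewrite scalerDr Ha -scalerDl; apply: AZ.
  + split; last exact: NZ.
    by rewrite scalerDr Hb -scalerDl; apply: BZ.
  + by rewrite -scalerDl [r + _]addrC subrK scale1r.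
- move=> [a [b [[Ha Na] [Hb Nb] ->]]]; split; last exact: ND.
  by exists a, b.
Qed.

(* After inverting [p.1], [N] becomes cyclic, generated by [p.2]. *)
Definition cyclic_patch N (p : R * M) :=
  N p.2 /\ forall y, N y -> cyclic p.2 (p.1 *: y).

Lemma refine_cyclic_patches s m : comaximal_colons -> forall L : seq (R * M),
  (forall p, p \in L -> cyclic_patch (span s) p) ->
  exists L', \sum_(p <- L') p.1 = \sum_(p <- L) p.1 /\
    forall p, p \in L' -> cyclic_patch (span (m :: s)) p.
Proof.
move=> colM; elim=> [|[t g] L IH] HL; first by exists [::]; rewrite big_nil.
have [L' [E H']] := IH (fun p pL => HL p (@mem_behead _ ((t, g) :: L) _ pL)).
have [Hg Hy] := HL (t, g) (mem_head _ _).
have [r [[a' Ha'] [b Hb]]] := colM g m.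
(* split the patch [(t, g)] into [(t r, g)] and [(t (1 - r), m)] *)
exists ((t * r, g) :: (t * (1 - r), m) :: L'); split.
  by rewrite !big_cons E /= addrA -mulrDr [r + _]addrC subrK mulr1.
move=> p; rewrite !inE => /orP[/eqP ->|/orP[/eqP ->|pL]]; last exact: H'.
- split; first exact: span_cons.
  move=> _ [a [y' [Hy' ->]]] /=; have [c Hc] := Hy y' Hy'; rewrite /= in Hc.
  exists (t * a * a' + r * c).
  rewrite scalerDr scalerDl; congr (_ + _).
    by rewrite scalerA mulrAC -[(t * a * r) *: m]scalerA Ha' scalerA.
  by rewrite [t * r]mulrC -scalerA Hc scalerA.
- split; first exact: span_mem (mem_head _ _).
  move=> _ [a [y' [Hy' ->]]] /=; have [c Hc] := Hy y' Hy'; rewrite /= in Hc.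
  exists (t * (1 - r) * a + c * b).
  rewrite scalerDr scalerDl scalerA; congr (_ + _).
  rewrite [t * _]mulrC -[((1 - r) * t) *: _]scalerA Hc scalerA [(1 - r) * c]mulrC.
  by rewrite -[(c * (1 - r)) *: _]scalerA Hb scalerA.
Qed.

Lemma span_cyclic_patches s : comaximal_colons -> exists L : seq (R * M),
  \sum_(p <- L) p.1 = 1 /\ forall p, p \in L -> cyclic_patch (span s) p.
Proof.
move=> colM; elim: s => [|m s [L [E H]]].
  exists [:: (1, 0)]; split; first by rewrite big_seq1.
  move=> p; rewrite inE => /eqP -> ; split=> //= y ->.
  by exists 0; rewrite !scaler0.
have [L' [E' H']] := refine_cyclic_patches m colM H.
by exists L'; rewrite E' E.
Qed.

Lemma cyclic_patches_finitely_generated N (L : seq (R * M)) : is_submodule N ->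
  \sum_(p <- L) p.1 = 1 -> (forall p, p \in L -> cyclic_patch N p) ->
  finitely_generated N.
Proof.
move=> HN sumL patchL; apply: (finitely_generated_glue (L := map fst L)) => //.
  by rewrite big_map.
move=> _ /mapP [[t g] pL ->] /=; have [Ng tNg] := patchL _ pL.
exists [:: g]; split; first by move=> x; rewrite inE => /eqP ->.
have [_ _ spanZ] := span_submodule [:: g].
by move=> y /tNg [a ->]; apply/spanZ/span_mem; rewrite inE.
Qed.

Lemma finitely_generated_cyclic_patches N : is_submodule N -> comaximal_colons ->
  finitely_generated N -> exists L : seq (R * M),
  \sum_(p <- L) p.1 = 1 /\ forall p, p \in L -> cyclic_patch N p.
Proof.
move=> HN colM [s [sN Ns]]; have [L [sumL patchL]] := span_cyclic_patches s colM.
exists L; split=> // p /patchL [gs tsg]; split; first exact: span_min HN sN _ gs.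
by move=> y /Ns; apply: tsg.
Qed.

End CyclicPatches.

Section Ideals.
Variable R : comPzRingType.
Implicit Types (I J A P Q : R -> Prop) (x y r a b c : R).

Lemma ideal0 I : is_ideal I -> I 0.
Proof. by case. Qed.

Lemma idealD I x y : is_ideal I -> I x -> I y -> I (x + y).
Proof. by case=> _ H _; apply: H. Qed.

Lemma idealM I x r : is_ideal I -> I x -> I (r * x).
Proof. by case=> _ _ H; apply: H. Qed.

Lemma idealMr I x r : is_ideal I -> I x -> I (x * r).
Proof. by move=> HI Hx; rewrite mulrC; apply: idealM. Qed.

Lemma idealB I x y : is_ideal I -> I x -> I y -> I (x - y).
Proof. by move=> HI Hx Hy; apply: idealD => //; rewrite -mulN1r; apply: idealM. Qed.

Lemma idealMn I x n : is_ideal I -> I x -> I (x *+ n).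
Proof.
by move=> HI Hx; elim: n => [|n IH]; rewrite ?mulr0n ?mulrS; [apply: ideal0|apply: idealD].
Qed.

Lemma ideal_sum I (T : Type) (s : seq T) (F : T -> R) :
  is_ideal I -> (forall i, I (F i)) -> I (\sum_(i <- s) F i).
Proof.
move=> HI HF; elim: s => [|i s IH]; rewrite ?big_nil ?big_cons; first exact: ideal0.
exact: idealD.
Qed.

Lemma ideal_exp_leq I x m n : is_ideal I -> I (x ^+ m) -> (m <= n)%N -> I (x ^+ n).
Proof. by move=> HI Hx Hmn; rewrite -(subnK Hmn) exprD; apply: idealM. Qed.

Lemma ideal1_all I : is_ideal I -> I 1 -> forall x, I x.
Proof. by move=> HI H1 x; rewrite -(mulr1 x); apply: idealM. Qed.

Lemma zero_ideal : is_ideal (fun x : R => x = 0).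
Proof. by split=> [//|x y -> ->|r x ->]; rewrite ?addr0 ?mulr0. Qed.

Lemma ideal_prod_ideal I J : is_ideal (ideal_prod I J).
Proof.
split.
- by move=> K HK _; apply: ideal0.
- by move=> x y Hx Hy K HK HG; apply: idealD => //; [apply: Hx|apply: Hy].
- by move=> r x Hx K HK HG; apply: idealM => //; apply: Hx.
Qed.

Lemma ideal_prod_mul I J a b : I a -> J b -> ideal_prod I J (a * b).
Proof. by move=> Ha Hb K HK HG; apply: HG. Qed.

Lemma ideal_prod_min I J K : is_ideal K -> (forall a b, I a -> J b -> K (a * b)) ->
  forall x, ideal_prod I J x -> K x.
Proof. by move=> HK HG x Hx; apply: Hx. Qed.

Lemma ideal_prod_subl I J : is_ideal I -> forall x, ideal_prod I J x -> I x.
Proof. by move=> HI; apply: ideal_prod_min => // a b Ha _; apply: idealMr. Qed.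

Lemma ideal_prod_mono I J I' J' : (forall x, I x -> I' x) -> (forall x, J x -> J' x) ->
  forall x, ideal_prod I J x -> ideal_prod I' J' x.
Proof.
move=> HI HJ; apply: ideal_prod_min; first exact: ideal_prod_ideal.
by move=> a b Ha Hb; apply: ideal_prod_mul; [apply: HI|apply: HJ].
Qed.

Lemma ideal_prodC I J x : ideal_prod I J x -> ideal_prod J I x.
Proof.
apply: ideal_prod_min; first exact: ideal_prod_ideal.
by move=> a b Ha Hb; rewrite mulrC; apply: ideal_prod_mul.
Qed.

Lemma ideal_mul_preimage K a : is_ideal K -> is_ideal (fun z => K (a * z)).
Proof.
move=> HK; split; first by rewrite mulr0; apply: ideal0.
- by move=> u v Hu Hv; rewrite mulrDr; apply: idealD.
- by move=> r u Hu; rewrite mulrCA; apply: idealM.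
Qed.

Lemma ideal_prodA I J K x :
  ideal_prod I (ideal_prod J K) x -> ideal_prod (ideal_prod I J) K x.
Proof.
apply: ideal_prod_min; first exact: ideal_prod_ideal.
move=> a z Ha.
apply: (ideal_prod_min (ideal_mul_preimage a (ideal_prod_ideal _ _))).
by move=> b c Hb Hc; rewrite mulrA; apply: ideal_prod_mul => //; apply: ideal_prod_mul.
Qed.

Definition principal x : R -> Prop := fun y => exists r, y = r * x.

Lemma principal_ideal x : is_ideal (principal x).
Proof.
split; first by exists 0; rewrite mul0r.
- by move=> _ _ [a ->] [b ->]; exists (a + b); rewrite mulrDl.
- by move=> r _ [a ->]; exists (r * a); rewrite mulrA.
Qed.

Lemma principal_self x : principal x x.
Proof. by exists 1; rewrite mul1r. Qed.

Lemma principal_sub I x : is_ideal I -> I x -> forall y, principal x y -> I y.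
Proof. by move=> HI Ix _ [r ->]; apply: idealM. Qed.

Definition colon J I : R -> Prop := fun c => forall y, I y -> J (c * y).

Lemma colon_ideal J I : is_ideal J -> is_ideal (colon J I).
Proof.
move=> HJ; split.
- by move=> y _; rewrite mul0r; apply: ideal0.
- by move=> u v Hu Hv y Hy; rewrite mulrDl; apply: idealD => //; [apply: Hu|apply: Hv].
- by move=> r u Hu y Hy; rewrite -mulrA; apply: idealM => //; apply: Hu.
Qed.

Definition ideal_add I J : R -> Prop := fun z => exists a b, [/\ I a, J b & z = a + b].

Lemma ideal_add_ideal I J : is_ideal I -> is_ideal J -> is_ideal (ideal_add I J).
Proof.
move=> HI HJ; split.
- by exists 0, 0; split; rewrite ?addr0; [exact: ideal0 HI|exact: ideal0 HJ|].
- move=> _ _ [a [b [Ha Hb ->]]] [a' [b' [Ha' Hb' ->]]]; exists (a + a'), (b + b').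
  by split; [exact: idealD HI Ha Ha'|exact: idealD HJ Hb Hb'|rewrite addrACA].
- move=> r _ [a [b [Ha Hb ->]]]; exists (r * a), (r * b).
  by split; [exact: idealM HI Ha|exact: idealM HJ Hb|rewrite mulrDr].
Qed.

Lemma ideal_addl I J x : is_ideal J -> I x -> ideal_add I J x.
Proof. by move=> HJ Hx; exists x, 0; split; rewrite ?addr0 //; exact: ideal0 HJ. Qed.

Lemma ideal_addr I J x : is_ideal I -> J x -> ideal_add I J x.
Proof. by move=> HI Hx; exists 0, x; split; rewrite ?add0r //; exact: ideal0 HI. Qed.

Definition annihilator x : R -> Prop := fun r => r * x = 0.

Lemma annihilator_ideal x : is_ideal (annihilator x).
Proof.
split; first by rewrite /annihilator mul0r.
- by move=> u v; rewrite /annihilator mulrDl => -> ->; rewrite addr0.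
- by move=> r u; rewrite /annihilator -mulrA => ->; rewrite mulr0.
Qed.

Lemma prime_is_ideal P : is_prime_ideal P -> is_ideal P.
Proof. by case. Qed.

Lemma prime_neq1 P : is_prime_ideal P -> ~ P 1.
Proof. by case. Qed.

Lemma prime_cancelr P a b : is_prime_ideal P -> P (a * b) -> ~ P b -> P a.
Proof. by case=> _ _ Pmul /Pmul [|]. Qed.

Lemma prime_1B P q : is_prime_ideal P -> P q -> ~ P (1 - q).
Proof.
move=> HP Pq P1q; apply: (prime_neq1 HP).
by rewrite -(subrK q 1); apply: idealD (prime_is_ideal HP) P1q Pq.
Qed.

Lemma prime_exp P x n : is_prime_ideal P -> P (x ^+ n) -> P x.
Proof.
move=> HP; elim: n => [|n IH]; first by rewrite expr0 => /(prime_neq1 HP).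
by rewrite exprS; case: HP => _ _ Pmul /Pmul [//|/IH].
Qed.

Definition loc_kernel P : R -> Prop := fun x => exists s, ~ P s /\ s * x = 0.

Lemma loc_kernel_ideal P : is_prime_ideal P -> is_ideal (loc_kernel P).
Proof.
case=> HP H1 Hpr; split.
- by exists 1; rewrite mul1r.
- move=> x y [s [Hs Hsx]] [t [Ht Hty]]; exists (s * t); split; first by case/Hpr.
  by rewrite mulrDr mulrAC Hsx mul0r -mulrA Hty mulr0 addr0.
- by move=> r x [s [Hs Hsx]]; exists s; split=> //; rewrite mulrCA Hsx mulr0.
Qed.

Lemma loc_kernel_sub P x : is_prime_ideal P -> loc_kernel P x -> P x.
Proof.
move=> HP [s [Hs Hsx]]; apply: contrapT => Px; apply: Hs.
by apply: (prime_cancelr HP) Px; rewrite Hsx; apply: ideal0 (prime_is_ideal HP).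
Qed.

Lemma mul_ideal_add_principal I a b u v :
  is_ideal I -> I (a * b) ->
  ideal_add I (principal a) u -> ideal_add I (principal b) v -> I (u * v).
Proof.
move=> HI Iab [x [_ [Ix [r ->] ->]]] [y [_ [Iy [r' ->] ->]]].
have -> : (x + r * a) * (y + r' * b) = (y + r' * b) * x + (r * a) * y + (r * r') * (a * b).
  by ring.
by apply: idealD HI (idealD HI (idealM _ HI Ix) (idealM _ HI Iy)) (idealM _ HI Iab).
Qed.

End Ideals.

Section Zorn.
Local Open Scope classical_set_scope.

Lemma Zorn_nonempty_chains (T : Type) (F : set (set T)) : F !=set0 ->
  (forall G, G `<=` F -> total_on G subset -> G !=set0 -> F (\bigcup_(X in G) X)) ->
  exists A, F A /\ forall B, A `<` B -> ~ F B.
Proof.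
move=> [X0 FX0] Fchain.
pose F0 X := X = set0 \/ F X.
have [A [F0A Amax]] : exists A, F0 A /\ forall B, A `<` B -> ~ F0 B.
  apply: Zorn_bigcup => G GF0 totG.
  have [[X1 [x1 [GX1 X1x]]]|Gempty] := pselect (exists X x, G X /\ X x); last first.
    left; apply/seteqP; split=> // x [X GX Xx].
    by apply: Gempty; exists X, x.
  pose G' X := G X /\ X !=set0.
  have -> : \bigcup_(X in G) X = \bigcup_(X in G') X.
    apply/seteqP; split=> x [X GX Xx]; exists X => //; last by case: GX.
    by split=> //; exists x.
  right; apply: Fchain; last by exists X1; split=> //; exists x1.
  - move=> X [GX [x Xx]]; case: (GF0 X GX) => // X0E.
    by rewrite X0E in Xx.
  - by move=> X Y [GX _] [GY _]; apply: totG.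
have FA : F A.
  case: F0A => // A0; have [X0E|X0ne] := pselect (X0 = set0); first by rewrite A0 -X0E.
  exfalso; apply: (Amax X0); last by right.
  by rewrite A0; split=> // X0sub; apply: X0ne; apply/seteqP; split.
by exists A; split=> // B AB FB; apply: (Amax B AB); right.
Qed.

Lemma total_on_upper_bound (T : Type) (G : set (set T)) X Y :
  total_on G subset -> G X -> G Y -> exists Z, [/\ G Z, X `<=` Z & Y `<=` Z].
Proof. by move=> totG GX GY; case: (totG X Y GX GY) => ?; [exists Y|exists X]; split. Qed.

Lemma chain_ideal_bigcup (R : comPzRingType) (G : set (set R)) :
  (forall X, G X -> is_ideal X) -> total_on G subset -> G !=set0 ->
  is_ideal (\bigcup_(X in G) X).
Proof.
move=> Gideal totG [X1 GX1]; split.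
- by exists X1 => //; apply: ideal0 (Gideal _ GX1).
- move=> u v [X GX Xu] [Y GY Yv].
  have [Z [GZ XZ YZ]] := total_on_upper_bound totG GX GY.
  by exists Z => //; apply: idealD (Gideal _ GZ) (XZ _ Xu) (YZ _ Yv).
- by move=> r u [X GX Xu]; exists X => //; apply: idealM (Gideal _ GX) Xu.
Qed.

End Zorn.

Section Primes.
Variable R : comPzRingType.
Implicit Types (A P Q : R -> Prop) (x y : R).
Local Open Scope classical_set_scope.

Lemma prime_avoiding A (S : R -> Prop) : is_ideal A -> S 1 ->
  (forall u v, S u -> S v -> S (u * v)) -> (forall x, A x -> ~ S x) ->
  exists Q, [/\ is_prime_ideal Q, forall x, A x -> Q x & forall x, Q x -> ~ S x].
Proof.
move=> HA S1 SM AS.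
pose F (X : set R) := [/\ is_ideal X, A `<=` X & forall x, X x -> ~ S x].
have [Q [[HQ AQ QS] Qmax]] : exists Q, F Q /\ forall B, Q `<` B -> ~ F B.
  apply: Zorn_nonempty_chains; first by exists A; split.
  move=> G GF totG [X1 GX1]; split.
  - by apply: chain_ideal_bigcup => //; [move=> X /GF []|exists X1].
  - by move=> x Ax; exists X1 => //; have [_ + _] := GF X1 GX1; apply.
  - by move=> x [X GX Xx]; have [_ _ +] := GF X GX; apply.
exists Q; split=> //; split=> // [Q1|a b Qab]; first exact: (QS 1).
apply: contrapT => /not_orP [Qa Qb].
have meets c : ~ Q c -> exists2 z, ideal_add Q (principal c) z & S z.
  move=> Qc; apply: contrapT => noz; apply: (Qmax (ideal_add Q (principal c))).
    split; first by move=> x Qx; apply: ideal_addl (principal_ideal c) Qx.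
    by move=> sub; apply: Qc; apply/sub/ideal_addr/principal_self.
  split; first exact: ideal_add_ideal (principal_ideal c).
    by move=> x Ax; apply: ideal_addl (principal_ideal c) (AQ x Ax).
  by move=> z Qz Sz; apply: noz; exists z.
have [u Qu Su] := meets a Qa; have [v Qv Sv] := meets b Qb.
exact: QS _ (mul_ideal_add_principal HQ Qab Qu Qv) (SM _ _ Su Sv).
Qed.

Lemma minimal_prime_sub Q : is_prime_ideal Q ->
  exists P, is_minimal_prime P /\ P `<=` Q.
Proof.
move=> HQ.
(* Zorn's lemma on the complements of the primes below [Q] *)
pose F (X : set R) := is_prime_ideal (~` X) /\ ~` X `<=` Q.
have [X0 [[HP PQ] Xmax]] : exists X0, F X0 /\ forall B, X0 `<` B -> ~ F B.
  apply: Zorn_nonempty_chains; first by exists (~` Q); rewrite /F setCK; split.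
  move=> G GF totG [X1 GX1]; split; [split; [split| |]|].
  - by move=> [X GX X0]; have [[[H0 _ _] _ _] _] := GF X GX; apply: H0.
  - move=> u v Nu Nv [X GX Xuv]; have [[[_ HD _] _ _] _] := GF X GX.
    by apply: (HD u v) => // [Xu|Xv]; [apply: Nu|apply: Nv]; exists X.
  - move=> r u Nu [X GX Xru]; have [[[_ _ HZ] _ _] _] := GF X GX.
    by apply: (HZ r u) => // Xu; apply: Nu; exists X.
  - move=> N1; apply: N1; exists X1 => //.
    by have [[_ H1 _] _] := GF X1 GX1; apply: contrapT.
  - move=> a b Nab; apply: contrapT => /not_orP [/contrapT [X GX Xa] /contrapT [Y GY Yb]].
    have [Z [GZ XZ YZ]] := total_on_upper_bound totG GX GY.
    have [[_ _ Zmul] _] := GF Z GZ.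
    have /Zmul [] : ~ Z (a * b) by move=> Zab; apply: Nab; exists Z.
      by apply; apply: XZ.
    by apply; apply: YZ.
  - move=> x Nx; have [_ HQ1] := GF X1 GX1.
    by apply: HQ1 => Xx; apply: Nx; exists X1.
exists (~` X0); split=> //; split=> // Q' HQ' Q'P x X0x.
have : ~` Q' `<=` X0.
  apply: contrapT => Nsub; apply: (Xmax (~` Q')).
    by split=> // y X0y Q'y; apply: (Q'P y Q'y).
  by split; rewrite setCK // => y /Q'P /PQ.
by move=> H; apply: contrapT => /H.
Qed.

(* Otherwise the multiplicative set [(R \ P) x^N] avoids [0], and a prime avoiding it
   lies inside [P] but misses [x], against the minimality of [P]. *)
Lemma minimal_prime_loc_nilpotent P x : is_minimal_prime P -> P x ->
  exists s k, ~ P s /\ s * x ^+ k = 0.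
Proof.
move=> [HP Pmin] Px; apply: contrapT => noann.
pose S z := exists s k, ~ P s /\ z = s * x ^+ k.
have S1 : S 1 by exists 1, 0%N; rewrite expr0 mulr1; split=> //; apply: prime_neq1.
have SM u v : S u -> S v -> S (u * v).
  move=> [s [k [Ps ->]]] [s' [k' [Ps' ->]]].
  exists (s * s'), (k + k')%N; split; first by case: HP => _ _ Pmul /Pmul [].
  by rewrite exprD; ring.
have S0 y : y = 0 -> ~ S y.
  by move=> -> [s [k [Ps E]]]; apply: noann; exists s, k.
have [Q [HQ _ QS]] := prime_avoiding (zero_ideal R) S1 SM S0.
have QP : Q `<=` P.
  move=> y Qy; apply: contrapT => Py; apply: (QS y Qy).
  by exists y, 0%N; rewrite expr0 mulr1.
apply: (QS x (Pmin Q HQ QP x Px)); exists 1, 1%N; split; first exact: prime_neq1.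
by rewrite expr1 mul1r.
Qed.

Lemma prime_above (I : R -> Prop) : is_ideal I -> ~ I 1 ->
  exists Q, is_prime_ideal Q /\ forall x, I x -> Q x.
Proof.
move=> HI I1.
have [|||Q [HQ IQ _]] := @prime_avoiding I (fun z => z = 1) HI => //.
- by move=> u v -> ->; rewrite mulr1.
- by move=> x Ix x1; rewrite x1 in Ix.
by exists Q.
Qed.

Lemma minimal_primes_incomparable P P' :
  is_minimal_prime P -> is_minimal_prime P' -> P <> P' -> exists x, P x /\ ~ P' x.
Proof.
move=> [HP Pmin] [HP' P'min] PP'; apply: contrapT => noX; apply: PP'.
have PP'sub x : P x -> P' x by move=> Px; apply: contrapT => P'x; apply: noX; exists x.
apply: funext => x; apply: propext; split; first exact: PP'sub.
exact: P'min P HP PP'sub x.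
Qed.

End Primes.

Section MultiplicationRing.
Variable R : comPzRingType.
Implicit Types (I J A P Q : R -> Prop) (x y r a b c : R).
Hypothesis multR : multiplication_ring R.

(* [Rx = D P] for some [D], so [P \subset A P] gives [Rx \subset A (D P) = A x]. *)
Lemma mult_absorb P A : is_ideal P -> is_ideal A ->
  (forall y, P y -> ideal_prod A P y) -> forall x, P x -> exists2 a, A a & x = a * x.
Proof.
move=> HP HA PAP x Px.
have [D [HD Dx]] := multR HP (principal_ideal x) (principal_sub HP Px).
have HAx : is_ideal (fun y => exists2 a, A a & y = a * x).
  split; first by exists 0; [exact: ideal0 HA|rewrite mul0r].
  - by move=> _ _ [a Ha ->] [b Hb ->]; exists (a + b); [exact: idealD HA Ha Hb|rewrite mulrDl].
  - by move=> r _ [a Ha ->]; exists (r * a); [exact: idealM HA Ha|rewrite mulrA].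
apply: (ideal_prod_min HAx); last exact/Dx/principal_self.
move=> d p Hd Hp.
apply: (ideal_prod_min (ideal_mul_preimage d HAx) _ (PAP p Hp)) => a p' Ha Hp'.
have [r Er] : principal x (d * p') by apply/Dx; apply: ideal_prod_mul.
by exists (a * r); [exact: idealMr|rewrite mulrCA Er mulrA].
Qed.

Lemma mult_colon_prod I c : is_ideal I -> I c -> ideal_prod (colon (principal c) I) I c.
Proof.
move=> HI Ic.
have [C [HC Cc]] := multR HI (principal_ideal c) (principal_sub HI Ic).
have : ideal_prod C I c by apply/Cc; exact: principal_self.
by apply: ideal_prod_mono => // u Cu y Iy; apply/Cc; apply: ideal_prod_mul.
Qed.

Lemma mult_comaximal_colons : comaximal_colons R^o.
Proof.
move=> a b.
pose I := ideal_add (principal a) (principal b).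
have HI : is_ideal I by apply: ideal_add_ideal; apply: principal_ideal.
pose E := ideal_add (colon (principal a) I) (colon (principal b) I).
have HE : is_ideal E by apply: ideal_add_ideal; apply: colon_ideal; apply: principal_ideal.
have Ia : I a by apply: ideal_addl; [exact: principal_ideal|exact: principal_self].
have Ib : I b by apply: ideal_addr; [exact: principal_ideal|exact: principal_self].
have IEI y : I y -> ideal_prod E I y.
  move: y => _ [_ [_ [[u ->] [v ->] ->]]].
  have HEI := ideal_prod_ideal E I.
  apply: idealD HEI (idealM _ HEI _) (idealM _ HEI _).
    apply: ideal_prod_mono (mult_colon_prod HI Ia) => // w Hw.
    by apply: ideal_addl => //; apply/colon_ideal/principal_ideal.
  apply: ideal_prod_mono (mult_colon_prod HI Ib) => // w Hw.
  by apply: ideal_addr => //; apply/colon_ideal/principal_ideal.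
have [e Ee Ea] := mult_absorb HI HE IEI Ia.
have [e' Ee' Eb] := mult_absorb HI HE IEI Ib.
(* [(1 - e)(1 - e')] kills [I], hence lies in [E]; so does [1]. *)
pose f := (1 - e) * (1 - e').
have Ef : E f.
  apply: ideal_addl; first exact/colon_ideal/principal_ideal.
  move=> _ [_ [_ [[u ->] [v ->] ->]]]; exists 0.
  have Fa : (1 - e) * a = 0 by rewrite mulrBl mul1r -Ea subrr.
  have Fb : (1 - e') * b = 0 by rewrite mulrBl mul1r -Eb subrr.
  have -> : f * (u * a + v * b) = u * (1 - e') * ((1 - e) * a) + v * (1 - e) * ((1 - e') * b).
    by rewrite /f; ring.
  by rewrite Fa Fb !mulr0 addr0 mul0r.
have E1 : E 1.
  have -> : 1 = f + e + e' - e * e' by rewrite /f; ring.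
  by apply: idealB => //; [apply: idealD => //; apply: idealD|apply: idealMr].
case: E1 => c [d [Hc Hd Ecd]]; exists c; split; first by have [r Er] := Hc b Ib; exists r.
by have [r Er] := Hd a Ia; exists r; rewrite Ecd addrC addKr.
Qed.

(* [P = C Q] with [C \subset P] since [s \notin P]; hence [P \subset Q P]. *)
Lemma mult_prime_absorb P Q s x : is_prime_ideal P -> is_prime_ideal Q ->
  (forall y, P y -> Q y) -> Q s -> ~ P s -> P x -> exists2 q, Q q & x = q * x.
Proof.
move=> HP HQ PQ Qs Ps Px.
have [C [HC PCQ]] := multR (prime_is_ideal HQ) (prime_is_ideal HP) PQ.
have CP c : C c -> P c.
  by move=> Cc; apply: (prime_cancelr HP) Ps; apply/PCQ; apply: ideal_prod_mul.
apply: (mult_absorb (prime_is_ideal HP) (prime_is_ideal HQ)) => // y /PCQ Py.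
by apply: ideal_prodC; apply: ideal_prod_mono Py.
Qed.

Lemma mult_primes_comaximal P P' x y : is_prime_ideal P -> is_prime_ideal P' ->
  P x -> ~ P' x -> P' y -> ~ P y -> exists p p', [/\ P p, P' p' & p + p' = 1].
Proof.
move=> HP HP' Px P'x P'y Py.
have IP := prime_is_ideal HP; have IP' := prime_is_ideal HP'.
have HA := ideal_add_ideal IP IP'.
have [C [HC PCA]] := multR HA IP (fun z => ideal_addl IP').
have CP c : C c -> P c.
  move=> Cc; apply: (prime_cancelr HP) Py; apply/PCA.
  by apply: ideal_prod_mul => //; apply: ideal_addr IP P'y.
have [_ [p [p' [Pp P'p' ->]]] Ex] : exists2 a, ideal_add P P' a & x = a * x.
  apply: (mult_absorb IP HA) => // z /PCA Pz.
  by apply: ideal_prodC; apply: ideal_prod_mono Pz.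
exists p, (1 - p); split=> //; last by rewrite addrC subrK.
have : P' (1 - (p + p')).
  apply: (prime_cancelr HP') P'x.
  by rewrite mulrBl mul1r -Ex subrr; apply: ideal0 IP'.
have -> : 1 - p = (1 - (p + p')) + p' by ring.
by move=> H1; apply: idealD IP' H1 P'p'.
Qed.

Lemma mult_loc_kernels_trivial x :
  (forall P, is_minimal_prime P -> loc_kernel P x) -> x = 0.
Proof.
move=> Kx; apply: contrapT => nx.
have [Q [HQ annQ]] : exists Q, is_prime_ideal Q /\ forall r, annihilator x r -> Q r.
  by apply: prime_above (annihilator_ideal x) _; rewrite /annihilator mul1r.
have [P [HP PQ]] := minimal_prime_sub HQ.
have [s [Ps sx]] := Kx P HP.
have Px : P x by apply: loc_kernel_sub (proj1 HP) _; exists s.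
have [q Qq Eq] := mult_prime_absorb (proj1 HP) HQ PQ (annQ s sx) Ps Px.
apply: (prime_1B HQ Qq); apply: annQ.
by rewrite /annihilator mulrBl mul1r -Eq subrr.
Qed.

Lemma mult_loc_kernel_not_sub P' P Q : is_minimal_prime P' -> is_minimal_prime P ->
  is_prime_ideal Q -> (forall z, P z -> Q z) -> P <> P' ->
  ~ (forall z, loc_kernel P' z -> Q z).
Proof.
move=> HP' HP HQ PQ PP' KQ.
have [x [Px P'x]] := minimal_primes_incomparable HP HP' PP'.
have [y [P'y Py]] := minimal_primes_incomparable HP' HP (nesym PP').
have [p [p' [Pp P'p' pp'1]]] := mult_primes_comaximal (proj1 HP) (proj1 HP') Px P'x P'y Py.
have [s [k [P's Es]]] := minimal_prime_loc_nilpotent HP' P'p'.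
have Qp' : Q p' by apply: (prime_exp (n := k)) => //; apply: KQ; exists s.
by apply: (prime_neq1 HQ); rewrite -pp'1; apply: idealD (prime_is_ideal HQ) (PQ _ Pp) Qp'.
Qed.

Lemma mult_loc_kernels_comaximal P1 P2 : is_minimal_prime P1 -> is_minimal_prime P2 ->
  P1 <> P2 -> exists a b, [/\ loc_kernel P1 a, loc_kernel P2 b & a + b = 1].
Proof.
move=> HP1 HP2 P12; apply: contrapT => nosum.
have IK1 := loc_kernel_ideal (proj1 HP1); have IK2 := loc_kernel_ideal (proj1 HP2).
have [Q [HQ KQ]] : exists Q, is_prime_ideal Q /\
    forall x, ideal_add (loc_kernel P1) (loc_kernel P2) x -> Q x.
  apply: prime_above (ideal_add_ideal IK1 IK2) _ => -[a [b [Ka Kb ab1]]].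
  by apply: nosum; exists a, b.
have [P [HP PQ]] := minimal_prime_sub HQ.
have [PP1|PP1] := pselect (P = P1).
  apply: (mult_loc_kernel_not_sub HP2 HP HQ PQ); first by rewrite PP1.
  by move=> z K2z; apply/KQ/ideal_addr.
by apply: (mult_loc_kernel_not_sub HP1 HP HQ PQ PP1) => z K1z; apply/KQ/ideal_addl.
Qed.

Hypothesis finR : finitely_many_minimal_primes R.

Lemma loc_kernel_annihilated P : is_minimal_prime P ->
  exists c, loc_kernel P (1 - c) /\ forall y, loc_kernel P y -> c * y = 0.
Proof.
move=> HP; have [n [f fmin]] := finR.
have IK := loc_kernel_ideal (proj1 HP).
pose other j := is_minimal_prime (f j) /\ f j <> P.
(* [c] is the product of elements [b_j] with [1 - b_j] in the kernel at [P]
   and [b_j] in the kernel at the other minimal primes [f j] *)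
have [b Hb] : {b : 'I_n -> R & forall j,
    (other j /\ loc_kernel P (1 - b j) /\ loc_kernel (f j) (b j)) \/ (~ other j /\ b j = 1)}.
  apply: (@choice _ _ (fun j bj => (other j /\ loc_kernel P (1 - bj) /\
    loc_kernel (f j) bj) \/ (~ other j /\ bj = 1))) => j.
  have [[fjmin fjP]|notj] := pselect (other j); last by exists 1; right.
  have [a [bj [Ka Kb E]]] := mult_loc_kernels_comaximal HP fjmin (nesym fjP).
  by exists bj; left; do !split=> //; rewrite -E addrK.
exists (\prod_(j < n) b j); split.
  apply: (big_ind (fun u => loc_kernel P (1 - u))).
  - by rewrite subrr; apply: ideal0 IK.
  - move=> u v Hu Hv; have -> : 1 - u * v = (1 - u) + u * (1 - v) by ring.
    by apply: idealD IK Hu (idealM _ IK Hv).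
  - move=> j _; case: (Hb j) => [[_ [H _]]|[_ ->]] //.
    by rewrite subrr; apply: ideal0 IK.
move=> y Ky; apply: mult_loc_kernels_trivial => P' HP'.
have [j Ej] := fmin P' HP'.
have P'E : P' = f j by apply: funext => x; apply: propext; apply: Ej.
have [fjP|fjP] := pselect (f j = P); first by rewrite P'E fjP; apply: idealM IK Ky.
case: (Hb j) => [[_ [_ Kbj]]|[notj _]]; last by case: notj; split=> //; rewrite -P'E.
rewrite P'E (bigD1 j) //= -mulrA.
by apply: idealMr (loc_kernel_ideal _) Kbj; rewrite -P'E; case: HP'.
Qed.

Lemma mult_locally_principal I : is_ideal I -> exists L : seq (R * R),
  \sum_(p <- L) p.1 = 1 /\ forall p, p \in L -> cyclic_patch (M := R^o) I p.
Proof.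
move=> HI.
pose T z := exists L : seq (R * R), z = \sum_(p <- L) p.1 /\
  forall p, p \in L -> cyclic_patch (M := R^o) I p.
apply: contrapT => noL.
have HT : is_ideal T.
  split.
  - by exists [::]; rewrite big_nil.
  - move=> _ _ [L1 [-> H1]] [L2 [-> H2]]; exists (L1 ++ L2); split; first by rewrite big_cat.
    by move=> p; rewrite mem_cat => /orP[/H1|/H2].
  - move=> r _ [L [-> HL]]; exists [seq (r * p.1, p.2) | p <- L]; split.
      by rewrite big_map mulr_sumr.
    move=> _ /mapP [p pL ->] /=; have [Ip Hp] := HL p pL; split=> // y Iy.
    by have [c Hc] := Hp y Iy; exists (r * c); rewrite -scalerA Hc scalerA.
have [Q [HQ TQ]] : exists Q, is_prime_ideal Q /\ forall x, T x -> Q x.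
  by apply: prime_above HT _ => -[L [E HL]]; apply: noL; exists L; rewrite -E.
have IQI y : I y -> ideal_prod Q I y.
  move=> Iy; apply: ideal_prod_mono (mult_colon_prod HI Iy) => // c Hc; apply: TQ.
  exists [:: (c, y)]; split; first by rewrite big_seq1.
  by move=> p; rewrite inE => /eqP -> /=; split=> // z /Hc [r ->]; exists r.
have [P [HP PQ]] := minimal_prime_sub HQ.
have [c [Kc Hc]] := loc_kernel_annihilated HP.
(* every element of [I] is killed by some [1 - q], [q \in Q], so [c I = 0] *)
have IK x : I x -> loc_kernel P x.
  move=> Ix; have [q Qq Eq] := mult_absorb HI (prime_is_ideal HQ) IQI Ix.
  exists (1 - q); split; first by move=> /PQ; apply: prime_1B.
  by rewrite mulrBl mul1r -Eq subrr.
have Tc : T c.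
  exists [:: (c, 0)]; split; first by rewrite big_seq1.
  move=> p; rewrite inE => /eqP -> /=; split; first exact: ideal0 HI.
  by move=> y /IK /Hc cy0; exists 0; rewrite scaler0.
by apply: (prime_1B HQ (TQ c Tc)); apply: PQ; apply: loc_kernel_sub (proj1 HP) Kc.
Qed.

Lemma mult_finitely_generated I : is_ideal I -> finitely_generated (M := R^o) I.
Proof.
move=> HI; have [L [sumL patchL]] := mult_locally_principal HI.
exact: (@cyclic_patches_finitely_generated _ R^o I L HI sumL patchL).
Qed.

End MultiplicationRing.

Section ArithmeticalNoetherian.
Variable R : comPzRingType.
Implicit Types (I J L : R -> Prop) (x y a b : R).

Lemma ideal_exprD L a b m n : is_ideal L -> L (a ^+ m) -> L (b ^+ n) ->
  L ((a + b) ^+ (m + n)).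
Proof.
move=> HL Ha Hb; rewrite exprDn; apply: ideal_sum => // i; apply: idealMn => //.
have [le_ni|lt_in] := leqP n i; first by apply: idealM => //; apply: ideal_exp_leq Hb le_ni.
by apply: idealMr => //; apply: (ideal_exp_leq HL Ha); rewrite -addnBA ?leq_addr // ltnW.
Qed.

Lemma ideal_sum_sq_exp L (T : eqType) (s : seq T) (F : T -> R) :
  is_ideal L -> (forall i, i \in s -> L (F i ^+ 2)) ->
  exists n, L ((\sum_(i <- s) F i) ^+ n).
Proof.
move=> HL; elim: s => [|i s IH] HF.
  by exists 1%N; rewrite big_nil expr1; apply: ideal0.
have [n Hn] := IH (fun j js => HF j (@mem_behead _ (i :: s) _ js)).
exists (2 + n)%N; rewrite big_cons; apply: ideal_exprD => //.
by apply: HF; rewrite inE eqxx.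
Qed.

Hypotheses (colR : comaximal_colons R^o)
  (noethR : forall I, is_ideal I -> finitely_generated (M := R^o) I).

(* [J = (J : I) I], checked on each cyclic patch [t I \subset R g] of [I]. *)
Lemma arithmetical_noetherian_multiplication : multiplication_ring R.
Proof.
move=> I J HI HJ JI.
have [cv [sumcv patchcv]] := finitely_generated_cyclic_patches (M := R^o) HI colR (noethR HI).
exists (colon J I); split; first exact: colon_ideal.
move=> x; split; last first.
  by move=> H; apply: (ideal_prod_min HJ _ H) => c y Hc Iy; apply: Hc.
move=> Jx.
pose L z := ideal_prod (colon J I) I (x * z).
have HL : is_ideal L := ideal_mul_preimage x (ideal_prod_ideal _ _).
have Lsq p : p \in cv -> L (p.1 ^+ 2).
  case: p => t g pcv; rewrite /L /=; have [Ig tIg] := patchcv (t, g) pcv.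
  have [s Es] : exists s, t * x = s * g := tIg x (JI x Jx).
  have Jts : colon J I (t * s).
    move=> y Iy; have [c Ec] : exists c, t * y = c * g := tIg y Iy.
    have -> : t * s * y = c * (t * x) by rewrite Es mulrAC Ec; ring.
    exact: idealM _ HJ (idealM _ HJ Jx).
  have -> : x * t ^+ 2 = t * (t * x) by rewrite expr2; ring.
  rewrite Es mulrA.
  exact: ideal_prod_mul.
have [n] := ideal_sum_sq_exp HL Lsq.
by rewrite sumcv expr1n /L mulr1.
Qed.

End ArithmeticalNoetherian.

Section NoetherianMinimalPrimes.
Variable R : comPzRingType.
Implicit Types (I P Q : R -> Prop) (Ps : seq (R -> Prop)) (x y a b : R).
Local Open Scope classical_set_scope.

Fixpoint ideal_prod_seq Ps : R -> Prop :=
  if Ps is P :: Ps' then ideal_prod P (ideal_prod_seq Ps') else fun _ => True.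

Fixpoint all_prime Ps : Prop :=
  if Ps is P :: Ps' then is_prime_ideal P /\ all_prime Ps' else True.

Lemma ideal_prod_seq_cat Ps1 Ps2 x : ideal_prod_seq (Ps1 ++ Ps2) x ->
  ideal_prod (ideal_prod_seq Ps1) (ideal_prod_seq Ps2) x.
Proof.
elim: Ps1 x => [|P Ps1 IH] x /=; first by move=> H; rewrite -[x]mul1r; apply: ideal_prod_mul.
by move=> H; apply: ideal_prodA; apply: ideal_prod_mono H => // y; apply: IH.
Qed.

Lemma all_prime_cat Ps1 Ps2 : all_prime Ps1 -> all_prime Ps2 -> all_prime (Ps1 ++ Ps2).
Proof. by elim: Ps1 => [//|P Ps1 IH] /= [HP H1] H2; split=> //; apply: IH. Qed.

Lemma all_prime_nth Ps i : all_prime Ps -> (i < size Ps)%N ->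
  is_prime_ideal (nth (fun _ => True) Ps i).
Proof. by elim: Ps i => [//|P Ps IH] [|i] /= [HP HPs] // lt_i; apply: IH. Qed.

Lemma prime_sup_ideal_prod_seq P Ps : is_prime_ideal P -> all_prime Ps ->
  (forall x, ideal_prod_seq Ps x -> P x) ->
  exists i, (i < size Ps)%N /\ forall x, nth (fun _ => True) Ps i x -> P x.
Proof.
move=> HP; elim: Ps => [|Q Ps IH] /=; first by move=> _ H; case: (prime_neq1 HP); apply: H.
move=> [HQ HPs] sub; have [QP|QnotP] := pselect (forall x, Q x -> P x); first by exists 0%N.
have [a [Qa Pa]] : exists a, Q a /\ ~ P a.
  apply: contrapT => H; apply: QnotP => x Qx; apply: contrapT => Px.
  by apply: H; exists x.
suff [i [lt_i Hi]] : exists i, (i < size Ps)%N /\ forall x, nth (fun _ => True) Ps i x -> P x.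
  by exists i.+1.
apply: IH => // b Hb; apply: (prime_cancelr HP _ Pa); rewrite mulrC.
by apply: sub; apply: ideal_prod_mul.
Qed.

Lemma total_on_upper_bound_seq (G : set (set R)) X1 (rs : seq R) :
  total_on G subset -> G X1 -> (forall r, r \in rs -> exists2 Y, G Y & Y r) ->
  exists X, [/\ G X, X1 `<=` X & forall r, r \in rs -> X r].
Proof.
move=> totG GX1; elim: rs => [|r rs IH] Hrs; first by exists X1; split.
have [X [GX X1X HX]] := IH (fun q qs => Hrs q (@mem_behead _ (r :: rs) _ qs)).
have [Y GY Yr] := Hrs r (mem_head _ _).
have [Z [GZ XZ YZ]] := total_on_upper_bound totG GX GY.
exists Z; split=> //; first by move=> x /X1X /XZ.
by move=> q; rewrite inE => /orP[/eqP ->|/HX /XZ //]; apply: YZ.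
Qed.

Hypothesis noethR : forall I, is_ideal I -> finitely_generated (M := R^o) I.

Lemma noetherian_prime_product_zero :
  exists Ps, all_prime Ps /\ forall x, ideal_prod_seq Ps x -> x = 0.
Proof.
apply: contrapT => noPs.
pose no_prime_product (X : set R) := is_ideal X /\
  ~ exists Ps, all_prime Ps /\ forall x, ideal_prod_seq Ps x -> X x.
have [B [[HB noB] Bmax]] : exists B, no_prime_product B /\
    forall C, B `<` C -> ~ no_prime_product C.
  apply: Zorn_nonempty_chains; first by exists (fun x => x = 0); split=> //; exact: zero_ideal.
  move=> G Gno totG [X1 GX1].
  have HU : is_ideal (\bigcup_(X in G) X).
    by apply: chain_ideal_bigcup => //; [move=> X /Gno []|exists X1].
  split=> // -[Ps [HPs PsU]].
  have [rs [rsU Urs]] := noethR HU.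
  have [X [GX _ Xrs]] := total_on_upper_bound_seq totG GX1 rsU.
  have [HX noX] := Gno X GX.
  by apply: noX; exists Ps; split=> // x /PsU /Urs; apply: (span_min (M := R^o) HX Xrs).
have B1 : ~ B 1.
  by move=> B1; apply: noB; exists [::]; split=> // x _; apply: ideal1_all.
have [a [b [Bab [Ba Bb]]]] : exists a b, B (a * b) /\ ~ B a /\ ~ B b.
  apply: contrapT => noab; apply: noB; exists [:: B]; split.
    split=> //; split=> // a b Bab; apply: contrapT => /not_orP [Ba Bb].
    by apply: noab; exists a, b.
  by move=> x /= Bx; apply: ideal_prod_subl HB x Bx.
have grow c : ~ B c -> exists Ps, all_prime Ps /\
    forall x, ideal_prod_seq Ps x -> ideal_add B (principal c) x.
  move=> Bc; apply: contrapT => noPs'.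
  apply: (Bmax (ideal_add B (principal c))).
    split; first by move=> x Bx; apply: ideal_addl (principal_ideal c) Bx.
    by move=> sub; apply: Bc; apply/sub/ideal_addr/principal_self.
  by split=> //; apply: ideal_add_ideal HB (principal_ideal c).
have [Ps1 [H1 S1]] := grow a Ba; have [Ps2 [H2 S2]] := grow b Bb.
apply: noB; exists (Ps1 ++ Ps2); split; first exact: all_prime_cat.
move=> x /ideal_prod_seq_cat /(ideal_prod_mono S1 S2).
by apply: (ideal_prod_min HB) => u v Bau Bbv; apply: mul_ideal_add_principal HB Bab Bau Bbv.
Qed.

Lemma noetherian_finitely_many_minimal_primes : finitely_many_minimal_primes R.
Proof.
have [Ps [HPs Ps0]] := noetherian_prime_product_zero.
exists (size Ps), (fun i => nth (fun _ => True) Ps i) => P [HP Pmin].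
have [i [lt_i Hi]] : exists i, (i < size Ps)%N /\
    forall x, nth (fun _ => True) Ps i x -> P x.
  by apply: prime_sup_ideal_prod_seq => // x /Ps0 ->; apply: ideal0 (prime_is_ideal HP).
exists (Ordinal lt_i) => x /=; split; last exact: Hi.
exact: Pmin _ (all_prime_nth HPs lt_i) Hi x.
Qed.

End NoetherianMinimalPrimes.

Section FaithfulPatches.
Variables (R : comPzRingType) (M : lmodType R).
Hypothesis faithM : faithful_module M.
Variable L : seq (R * M).
Hypotheses (sumL : \sum_(p <- L) p.1 = 1)
  (patchL : forall p, p \in L -> cyclic_patch (fun _ => True) p).

(* [t z M \subset z R g = 0], so faithfulness gives [t z = 0]. *)
Lemma patch_annihilator p z : p \in L -> z *: p.2 = 0 -> p.1 * z = 0.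
Proof.
move=> pL zg0; apply: faithM => m; have [_ /(_ m I) [c Hc]] := patchL pL.
by rewrite mulrC -scalerA Hc scalerA mulrC -scalerA zg0 scaler0.
Qed.

Lemma patched_comaximal_colons : comaximal_colons M -> comaximal_colons R^o.
Proof.
move=> colM a b.
suff /(_ L (fun p pL => pL)) [r [[al Hal] [be Hbe]]] :
    forall L', (forall p, p \in L' -> p \in L) ->
    exists r : R, (exists al, r * b = al * a) /\
                  (exists be, (\sum_(p <- L') p.1 - r) * a = be * b).
  by exists r; split; [exists al|exists be; rewrite -sumL].
elim=> [|[t g] L' IH] L'L.
  by exists 0; split; [exists 0; rewrite !mul0r|exists 0; rewrite big_nil subr0 !mul0r].
have [r [[al Hal] [be Hbe]]] := IH (fun p pL' => L'L p (@mem_behead _ ((t, g) :: L') _ pL')).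
have tgL : (t, g) \in L by apply/L'L/mem_head.
have [s [[u Hu] [v Hv]]] := colM (a *: g) (b *: g).
have E1 : t * s * b = t * u * a.
  have /(patch_annihilator tgL) : (s * b - u * a) *: g = 0.
    by rewrite scalerBl -!scalerA Hu subrr.
  by move=> /= K; apply/eqP; rewrite -subr_eq0; apply/eqP; rewrite -K; ring.
have E2 : t * (1 - s) * a = t * v * b.
  have /(patch_annihilator tgL) : ((1 - s) * a - v * b) *: g = 0.
    by rewrite scalerBl -!scalerA Hv subrr.
  by move=> /= K; apply/eqP; rewrite -subr_eq0; apply/eqP; rewrite -K; ring.
exists (t * s + r); split; first by exists (t * u + al); rewrite mulrDl E1 Hal mulrDl.
exists (t * v + be); rewrite big_cons /=.
have -> : (t + \sum_(j <- L') j.1 - (t * s + r)) * a =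
  t * (1 - s) * a + (\sum_(j <- L') j.1 - r) * a by ring.
by rewrite E2 Hbe mulrDl.
Qed.

Lemma patched_noetherian : noetherian_module M ->
  forall I, is_ideal I -> finitely_generated (M := R^o) I.
Proof.
move=> noethM I HI.
apply: (finitely_generated_glue (M := R^o) (L := map fst L)) => //; first by rewrite big_map.
move=> _ /mapP [[t g] tgL ->] /=.
pose N (m : M) := exists2 r, I r & m = r *: g.
have HN : is_submodule N.
  split; first by exists 0; [exact: ideal0 HI|rewrite scale0r].
  - by move=> _ _ [r Ir ->] [r' Ir' ->]; exists (r + r'); [exact: idealD|rewrite scalerDl].
  - by move=> c _ [r Ir ->]; exists (c * r); [exact: idealM|rewrite scalerA].
have [s [sN Ns]] := noetherian_finitely_generated noethM HN.
(* lift the generators of [I g] to generators in [I] *)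
have [rs [rsI Hrs]] : exists rs : seq R, (forall r, r \in rs -> I r) /\
    forall m, span s m -> exists2 r, span (M := R^o) rs r & m = r *: g.
  elim: s sN {Ns} => [|m0 s IH] sN.
    by exists [::]; split=> // m ->; exists 0; rewrite ?scale0r.
  have [rs [rsI Hrs]] := IH (fun x xs => sN x (@mem_behead _ (m0 :: s) _ xs)).
  have [r0 Ir0 E0] := sN m0 (mem_head _ _).
  exists (r0 :: rs); split; first by move=> r; rewrite inE => /orP[/eqP ->|/rsI].
  move=> _ [c [m' [Hm' ->]]]; have [r' Hr' ->] := Hrs m' Hm'.
  by exists (c * r0 + r'); [exists c, r'|rewrite E0 scalerA scalerDl].
exists rs; split=> // x Ix.
have [r rrs xr] := Hrs _ (Ns _ (ex_intro2 _ _ x Ix erefl)).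
have /(patch_annihilator tgL) /= tx : (x - r) *: g = 0 by rewrite scalerBl xr subrr.
have -> : t *: (x : R^o) = t * r by apply/eqP; rewrite -subr_eq0 -mulrBr tx.
by have [_ _ spanZ] := span_submodule (M := R^o) rs; apply: spanZ.
Qed.

End FaithfulPatches.

Theorem theorem1p4 (R : comPzRingType) :
  (multiplication_ring R /\ finitely_many_minimal_primes R) <->
  exists M : lmodType R,
    [/\ faithful_module M, noetherian_module M & distributive_module M].
Proof.
split=> [[multR finR]|[M [faithM noethM distrM]]].
- exists R^o; split.
  + by move=> r /(_ 1); rewrite [r *: _]mulr1.
  + by apply: finitely_generated_noetherian => I; apply: mult_finitely_generated.
  + exact/comaximal_colons_distributive/mult_comaximal_colons.
- have colM := distributive_comaximal_colons distrM.
  have HM : is_submodule (fun _ : M => True) by [].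
  have [L [sumL patchL]] := finitely_generated_cyclic_patches HM colM
    (noetherian_finitely_generated noethM HM).
  have noethR := patched_noetherian faithM sumL patchL noethM.
  split; last exact: noetherian_finitely_many_minimal_primes noethR.
  have colR := patched_comaximal_colons faithM sumL patchL colM.
  exact: arithmetical_noetherian_multiplication colR noethR.
Qed.
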